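(* Let $M$ and $N$ be $\lambda$-terms such that $M$ is simple. If $M$ does not improve $N$ eventually, i.e. if not $\mathrm{BT}^c(M) \le_{\mathrm{ev}} \mathrm{BT}^c(N)$, then $M \neq_\beta N$.
   Context: Untyped $\lambda$-calculus modulo $\alpha$. Head reduction step: $\lambda x_1\ldots x_n.(\lambda y.P)QQ_1\ldots Q_m \to \lambda x_1\ldots x_n.P[y:=Q]Q_1\ldots Q_m$; hnf: $\lambda x_1\ldots x_n.\,yQ_1\ldots Q_m$. Clocked Böhm tree $\mathrm{BT}^c(M)$ (coinductive): $\bot$ if $M$ has no hnf; otherwise if $M\to_h^k \lambda x_1\ldots x_n.\,yM_1\ldots M_m$ is the head reduction to hnf, $\mathrm{BT}^c(M)$ is $\lambda x_1\ldots x_n.\,y\,\mathrm{BT}^c(M_1)\ldots\mathrm{BT}^c(M_m)$ with root annotated by $k$. Positions: sequences over $\{0,1,2\}$ ($0$ abstraction body, $1$ function, $2$ argument). $T_1 \le_{\mathrm{ev}} T_2$ means $T_1,T_2$ coincide after erasing annotations and there is $\ell$ such that at every position $p$ of $T_1$ with $|p|\ge\ell$, either neither subtree at $p$ has a root annotation or both do, with annotations $k_1\le k_2$. A redex $(\lambda x.P)Q$ is simple if $x$ occurs at most once in $P$ or $Q$ is a $\beta$-normal form. The simple terms form the largest set $X$ such that each $M\in X$ either has no hnf, or its head reduction to hnf $\lambda x_1\ldots x_n.\,yM_1\ldots M_m$ contracts only simple redexes and $M_1,\dots,M_m\in X$. *)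

(* Untyped lambda-calculus with de Bruijn indices
   (so terms are identified modulo alpha by construction). *)
From Stdlib Require Import Arith List Relations ClassicalEpsilon.
Import ListNotations.

Inductive term : Type :=
| Var : nat -> term
| App : term -> term -> term
| Lam : term -> term.

Fixpoint lift (d c : nat) (t : term) : term :=
  match t with
  | Var x => if Nat.ltb x c then Var x else Var (x + d)
  | App a b => App (lift d c a) (lift d c b)
  | Lam a => Lam (lift d (S c) a)
  end.

(* t[k := s], removing binder k *)
Fixpoint subst (k : nat) (s : term) (t : term) : term :=
  match t with
  | Var x => if Nat.ltb x k then Var x
             else if Nat.eqb x k then lift k 0 s else Var (pred x)
  | App a b => App (subst k s a) (subst k s b)
  | Lam a => Lam (subst (S k) s a)
  end.

Definition beta_contract (P Q : term) : term := subst 0 Q P.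

Inductive beta : term -> term -> Prop :=
| beta_redex P Q : beta (App (Lam P) Q) (beta_contract P Q)
| beta_appl a a' b : beta a a' -> beta (App a b) (App a' b)
| beta_appr a b b' : beta b b' -> beta (App a b) (App a b')
| beta_lam a a' : beta a a' -> beta (Lam a) (Lam a').

Definition beta_eq : term -> term -> Prop := clos_refl_sym_trans term beta.

Fixpoint beta_nf (t : term) : Prop :=
  match t with
  | Var _ => True
  | App (Lam _) _ => False
  | App a b => beta_nf a /\ beta_nf b
  | Lam a => beta_nf a
  end.

(* head reduction steps, restricted to contracting redexes (\x.P)Q with R P Q:
   \x1..xn.(\y.P) Q Q1..Qm -> \x1..xn.P[y:=Q] Q1..Qm *)
Inductive head_red (R : term -> term -> Prop) : term -> term -> Prop :=
| hr_redex P Q : R P Q -> head_red R (App (Lam P) Q) (beta_contract P Q)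
| hr_app a b a' c : head_red R (App a b) a' -> head_red R (App (App a b) c) (App a' c)
| hr_lam a a' : head_red R a a' -> head_red R (Lam a) (Lam a').

Definition any_redex (P Q : term) : Prop := True.
Definition head_step : term -> term -> Prop := head_red any_redex.

Inductive steps (r : term -> term -> Prop) : nat -> term -> term -> Prop :=
| steps0 t : steps r 0 t t
| stepsS k t u v : r t u -> steps r k u v -> steps r (S k) t v.

Fixpoint lams (n : nat) (t : term) : term :=
  match n with 0 => t | S n' => Lam (lams n' t) end.

Definition apps (h : term) (args : list term) : term := fold_left App args h.

Definition hnf (n y : nat) (args : list term) : term := lams n (apps (Var y) args).

Definition head_to_hnf (M : term) (k n y : nat) (args : list term) : Prop :=
  steps head_step k M (hnf n y args).

Definition has_hnf (M : term) : Prop :=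
  exists k n y args, head_to_hnf M k n y args.

(* the (unique, by determinism of head reduction) data of the head reduction
   to hnf, or None if M has no hnf *)
Definition hnf_data (M : term) : option (nat * nat * nat * list term).
Proof.
  destruct (excluded_middle_informative (has_hnf M)) as [H|H].
  - apply constructive_indefinite_description in H as [k H].
    apply constructive_indefinite_description in H as [n H].
    apply constructive_indefinite_description in H as [y H].
    apply constructive_indefinite_description in H as [args _].
    exact (Some (k, n, y, args)).
  - exact None.
Defined.

(* 0 abstraction body, 1 function, 2 argument *)
Inductive dir : Type := D0 | D1 | D2.
Definition position := list dir.

Inductive label : Type :=
| LLam | LApp | LVar (x : nat) | LBot.

(* a node: its label and its annotation (clock), if any *)
Definition node : Type := (label * option nat)%type.

(* a tree: the node at each position, None if the position is not in the tree *)
Definition ctree : Type := position -> option node.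

(* BT^c(M):  bot if M has no hnf; otherwise \x1..xn. y BT^c(M1)..BT^c(Mm)
   with root annotated by k, where M ->h^k \x1..xn. y M1..Mm. *)
Fixpoint BTc (M : term) (p : position) {struct p} : option node :=
  match hnf_data M with
  | None => match p with [] => Some (LBot, None) | _ => None end
  | Some (k, n, y, args) =>
      (fix spine (ann : option nat) (n : nat) (rargs : list term) (q : position)
           {struct q} : option node :=
         match n with
         | S n' => match q with
                   | [] => Some (LLam, ann)
                   | D0 :: q' => spine None n' rargs q'
                   | _ => None
                   end
         | 0 => match rargs with
                | [] => match q with [] => Some (LVar y, ann) | _ => None end
                | A :: rargs' => match q with
                                 | [] => Some (LApp, ann)
                                 | D1 :: q' => spine None 0 rargs' q'
                                 | D2 :: q' => BTc A q'
                                 | _ => None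
                                 end
                end
         end) (Some k) n (rev args) p
  end.

Definition erase (o : option node) : option label :=
  match o with Some (l, _) => Some l | None => None end.

Definition ev_le (T1 T2 : ctree) : Prop :=
  (forall p, erase (T1 p) = erase (T2 p)) /\
  exists l : nat, forall p nd1, l <= length p -> T1 p = Some nd1 ->
    match snd nd1, option_map snd (T2 p) with
    | None, Some None => True
    | Some k1, Some (Some k2) => k1 <= k2
    | _, _ => False
    end.

Fixpoint occ (k : nat) (t : term) : nat :=
  match t with
  | Var x => if Nat.eqb x k then 1 else 0
  | App a b => occ k a + occ k b
  | Lam a => occ (S k) a
  end.

Definition simple_redex (P Q : term) : Prop := occ 0 P <= 1 \/ beta_nf Q.

CoInductive simple_term : term -> Prop :=
| st_nohnf M : ~ has_hnf M -> simple_term M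
| st_hnf M k n y args :
    steps (head_red simple_redex) k M (hnf n y args) ->
    (forall A, In A args -> simple_term A) ->
    simple_term M.

(* By confluence, M and N have a common reduct L. Reduction does not lengthen
   head reductions to head normal form (a head step of M is either mirrored by one
   of the reduct or has already been performed), and a term with a reduct in head
   normal form has one itself; hence BT^c(L) has the shape of BT^c(M) and of
   BT^c(N), with clocks bounded by theirs. For simple M the clock of L is smaller
   than that of M at only finitely many positions: a simple redex does not
   duplicate the work done inside its argument, so each head step of M missing
   from the head reduction of L is paid for by a step of M ->> L outside the
   arguments, and different positions are paid for by different steps. Beyond
   these positions the clocks of M and L agree, so BT^c(M) <=_ev BT^c(N). *)

From Stdlib Require Import Arith List Lia ClassicalEpsilon Classical.
Import ListNotations.

Ltac destruct_nat_tests := repeat match goal with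
  | H : Nat.ltb _ _ = true |- _ => apply Nat.ltb_lt in H
  | H : Nat.ltb _ _ = false |- _ => apply Nat.ltb_ge in H
  | H : Nat.eqb _ _ = true |- _ => apply Nat.eqb_eq in H
  | H : Nat.eqb _ _ = false |- _ => apply Nat.eqb_neq in H
  | |- context [Nat.ltb ?a ?b] => destruct (Nat.ltb a b) eqn:?
  | |- context [Nat.eqb ?a ?b] => destruct (Nat.eqb a b) eqn:?
  end.

Lemma lift_lift t d d' c c' : c <= c' <= c + d ->
  lift d' c' (lift d c t) = lift (d + d') c t.
Proof.
  revert c c'; induction t; intros c c' Hc; simpl.
  - destruct_nat_tests; simpl; destruct_nat_tests; f_equal; lia.
  - rewrite IHt1, IHt2; auto.
  - rewrite IHt; auto; lia.
Qed.

Lemma lift_lift_comm t d d' c c' : c <= c' ->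
  lift d c (lift d' c' t) = lift d' (c' + d) (lift d c t).
Proof.
  revert c c'; induction t; intros c c' Hc; simpl.
  - destruct_nat_tests; simpl; destruct_nat_tests; f_equal; lia.
  - rewrite IHt1, IHt2; auto.
  - rewrite IHt; auto; lia.
Qed.

Lemma subst_lift t s d c k : c <= k <= c + d ->
  subst k s (lift (S d) c t) = lift d c t.
Proof.
  revert c k; induction t; intros c k Hk; simpl.
  - destruct_nat_tests; simpl; destruct_nat_tests; f_equal; lia.
  - rewrite IHt1, IHt2; auto.
  - rewrite IHt; auto; lia.
Qed.

Lemma lift_subst_above t s d c k : c <= k ->
  lift d c (subst k s t) = subst (k + d) s (lift d c t).
Proof.
  revert c k; induction t; intros c k Hk; simpl.
  - destruct_nat_tests; simpl; destruct_nat_tests; try (f_equal; lia).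
    subst. rewrite lift_lift by lia. f_equal; lia.
  - rewrite IHt1, IHt2; auto.
  - rewrite IHt by lia. reflexivity.
Qed.

Lemma lift_subst_below t s d c k : k <= c ->
  lift d c (subst k s t) = subst k (lift d (c - k) s) (lift d (S c) t).
Proof.
  revert c k; induction t; intros c k Hk; simpl.
  - destruct_nat_tests; simpl; destruct_nat_tests; try (f_equal; lia).
    subst. rewrite (lift_lift_comm s k d 0 (c - k)) by lia. f_equal; lia.
  - rewrite IHt1, IHt2; auto.
  - rewrite IHt by lia. repeat f_equal; lia.
Qed.

Lemma subst_subst t u v i k : i <= k ->
  subst k u (subst i v t) = subst i (subst (k - i) u v) (subst (S k) u t).
Proof.
  revert i k; induction t; intros i k Hk; simpl.
  - destruct_nat_tests; simpl; destruct_nat_tests; try (f_equal; lia).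
    + subst. rewrite (lift_subst_above v u i 0 (k - i)) by lia. f_equal; lia.
    + subst. rewrite subst_lift by lia. reflexivity.
  - rewrite IHt1, IHt2; auto.
  - rewrite IHt by lia. repeat f_equal; lia.
Qed.

Lemma subst_subst0 t u v k :
  subst k u (subst 0 v t) = subst 0 (subst k u v) (subst (S k) u t).
Proof. rewrite subst_subst, Nat.sub_0_r by lia. reflexivity. Qed.

Lemma lift_subst0 t s d c :
  lift d c (subst 0 s t) = subst 0 (lift d c s) (lift d (S c) t).
Proof. rewrite lift_subst_below, Nat.sub_0_r by lia. reflexivity. Qed.

Lemma steps_trans r a x y b z :
  steps r a x y -> steps r b y z -> steps r (a + b) x z.
Proof. induction 1; intros; simpl; auto. econstructor; eauto. Qed.

Lemma steps_one (r : term -> term -> Prop) x y : r x y -> steps r 1 x y.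
Proof. econstructor; eauto. constructor. Qed.

Lemma steps_map (r r' : term -> term -> Prop) (f : term -> term) :
  (forall x y, r x y -> r' (f x) (f y)) ->
  forall k x y, steps r k x y -> steps r' k (f x) (f y).
Proof. induction 2; econstructor; eauto. Qed.

Lemma steps_incl (r r' : term -> term -> Prop) :
  (forall x y, r x y -> r' x y) -> forall k x y, steps r k x y -> steps r' k x y.
Proof. induction 2; econstructor; eauto. Qed.

Definition reachable (r : term -> term -> Prop) (x y : term) : Prop :=
  exists k, steps r k x y.

Lemma reachable_refl r x : reachable r x x.
Proof. exists 0. constructor. Qed.

Lemma reachable_step (r : term -> term -> Prop) x y : r x y -> reachable r x y.
Proof. exists 1. apply steps_one; auto. Qed.

Lemma reachable_trans r x y z : reachable r x y -> reachable r y z -> reachable r x z.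
Proof. intros [a Ha] [b Hb]. exists (a + b). eapply steps_trans; eauto. Qed.

Lemma reachable_map (r r' : term -> term -> Prop) (f : term -> term) :
  (forall x y, r x y -> r' (f x) (f y)) ->
  forall x y, reachable r x y -> reachable r' (f x) (f y).
Proof. intros Hf x y [k H]. exists k. eapply steps_map; eauto. Qed.

Notation red := (reachable beta).

Lemma beta_lift M N d c : beta M N -> beta (lift d c M) (lift d c N).
Proof.
  intros H; revert c; induction H; intros; simpl; try (constructor; auto; fail).
  unfold beta_contract. rewrite lift_subst0. apply beta_redex.
Qed.

Lemma beta_subst M N k s : beta M N -> beta (subst k s M) (subst k s N).
Proof.
  intros H; revert k; induction H; intros; simpl; try (constructor; auto; fail).
  unfold beta_contract. rewrite subst_subst0. apply beta_redex.
Qed.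

Lemma steps_appl c a a' b : steps beta c a a' -> steps beta c (App a b) (App a' b).
Proof. apply (steps_map beta beta (fun x => App x b)). intros; constructor; auto. Qed.

Lemma steps_appr c a b b' : steps beta c b b' -> steps beta c (App a b) (App a b').
Proof. apply (steps_map beta beta (App a)). intros; constructor; auto. Qed.

Lemma steps_app c1 c2 a a' b b' : steps beta c1 a a' -> steps beta c2 b b' ->
  steps beta (c1 + c2) (App a b) (App a' b').
Proof. intros. eapply steps_trans; [apply steps_appl | apply steps_appr]; eauto. Qed.

Lemma steps_lams n c T T' : steps beta c T T' -> steps beta c (lams n T) (lams n T').
Proof.
  induction n; simpl; auto. intros H.
  apply (steps_map beta beta Lam); auto. intros; constructor; auto.
Qed.

Lemma steps_lift c P P' d k : steps beta c P P' -> steps beta c (lift d k P) (lift d k P').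
Proof. apply steps_map. intros; apply beta_lift; auto. Qed.

Lemma steps_subst c P P' k Q : steps beta c P P' -> steps beta c (subst k Q P) (subst k Q P').
Proof. apply steps_map. intros; apply beta_subst; auto. Qed.

Lemma steps_subst_arg P b Q Q' k : steps beta b Q Q' ->
  steps beta (occ k P * b) (subst k Q P) (subst k Q' P).
Proof.
  revert k; induction P; intros k HQ; simpl.
  - destruct_nat_tests; simpl; try constructor; try lia.
    subst. rewrite Nat.add_0_r. apply steps_lift; auto.
  - rewrite Nat.mul_add_distr_r. apply steps_app; auto.
  - apply (steps_lams 1). auto.
Qed.

Lemma beta_nf_irreducible Q X : beta Q X -> beta_nf Q -> False.
Proof. induction 1; simpl; intros; auto; destruct a; simpl in *; tauto. Qed.

Lemma steps_from_beta_nf b Q X : steps beta b Q X -> beta_nf Q -> b = 0.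
Proof. intros H HQ. inversion H; auto. subst. exfalso; eapply beta_nf_irreducible; eauto. Qed.

(** * Confluence by parallel reduction *)

Inductive par : term -> term -> Prop :=
| par_var x : par (Var x) (Var x)
| par_app a a' b b' : par a a' -> par b b' -> par (App a b) (App a' b')
| par_lam a a' : par a a' -> par (Lam a) (Lam a')
| par_beta a a' b b' : par a a' -> par b b' -> par (App (Lam a) b) (subst 0 b' a').

Lemma par_refl t : par t t.
Proof. induction t; constructor; auto. Qed.

Lemma par_lift M N d c : par M N -> par (lift d c M) (lift d c N).
Proof.
  intros H; revert c; induction H; intros; simpl; try (constructor; auto; fail).
  - destruct (Nat.ltb x c); constructor.
  - rewrite lift_subst0. apply par_beta; auto.
Qed.

Lemma par_subst M M' N N' k : par M M' -> par N N' -> par (subst k N M) (subst k N' M').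
Proof.
  intros H; revert k; induction H; intros k HN; simpl; try (constructor; auto; fail).
  - destruct_nat_tests; try constructor. apply par_lift; auto.
  - rewrite subst_subst0. apply par_beta; auto.
Qed.

Fixpoint complete_development (t : term) : term :=
  match t with
  | Var x => Var x
  | App (Lam a) b => subst 0 (complete_development b) (complete_development a)
  | App a b => App (complete_development a) (complete_development b)
  | Lam a => Lam (complete_development a)
  end.

Lemma par_complete_development M N : par M N -> par N (complete_development M).
Proof.
  induction 1; simpl.
  - constructor.
  - destruct a; try (constructor; auto; fail).
    inversion H; subst. inversion IHpar1; subst. apply par_beta; auto.
  - constructor; auto.
  - apply par_subst; auto.
Qed.

Lemma beta_par M N : beta M N -> par M N.
Proof. induction 1; constructor; auto using par_refl. Qed.

Lemma red_app a a' b b' : red a a' -> red b b' -> red (App a b) (App a' b').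
Proof. intros [x Ha] [y Hb]. exists (x + y). apply steps_app; auto. Qed.

Lemma red_lam a a' : red a a' -> red (Lam a) (Lam a').
Proof. intros [x Ha]. exists x. apply (steps_lams 1); auto. Qed.

Lemma par_red M N : par M N -> red M N.
Proof.
  induction 1.
  - apply reachable_refl.
  - apply red_app; auto.
  - apply red_lam; auto.
  - eapply reachable_trans; [apply red_app; [apply red_lam|]; eauto|].
    apply reachable_step. apply beta_redex.
Qed.

Lemma par_strip k M N1 N2 : steps par k M N2 -> par M N1 ->
  exists Z, steps par k N1 Z /\ par N2 Z.
Proof.
  intros H; revert N1; induction H as [t | k t u v Htu _ IH]; intros N1 HN1.
  - exists N1. split; [constructor | auto].
  - destruct (IH _ (par_complete_development _ _ Htu)) as [Z [HZ1 HZ2]].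
    exists Z. split; auto. econstructor; eauto. apply par_complete_development; auto.
Qed.

Lemma par_steps_diamond a b M A B : steps par a M A -> steps par b M B ->
  exists Z, steps par b A Z /\ steps par a B Z.
Proof.
  intros H; revert b B; induction H as [t | a t u v Htu _ IH]; intros b B HB.
  - exists B; split; auto. constructor.
  - destruct (par_strip _ _ _ _ HB Htu) as [Z [HZ1 HZ2]].
    destruct (IH _ _ HZ1) as [W [HW1 HW2]]. exists W; split; auto. econstructor; eauto.
Qed.

Lemma red_confluent M A B : red M A -> red M B -> exists Z, red A Z /\ red B Z.
Proof.
  intros [a HA] [b HB].
  destruct (par_steps_diamond a b M A B) as [Z [H1 H2]];
    try (eapply steps_incl; [apply beta_par | eauto]).
  assert (Hpar : forall k X Y, steps par k X Y -> red X Y).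
  { induction 1; [apply reachable_refl | eapply reachable_trans; eauto using par_red]. }
  exists Z; split; eapply Hpar; eauto.
Qed.

Lemma beta_eq_common_reduct M N : beta_eq M N -> exists L, red M L /\ red N L.
Proof.
  induction 1 as [x y H | x | x y _ [L [H1 H2]] | x y z _ [L1 [H1 H2]] _ [L2 [H3 H4]]].
  - exists y; split; [apply reachable_step; auto | apply reachable_refl].
  - exists x; split; apply reachable_refl.
  - exists L; auto.
  - destruct (red_confluent _ _ _ H2 H3) as [Z [H5 H6]].
    exists Z; split; eapply reachable_trans; eauto.
Qed.

Definition spine (n : nat) (h : term) (args : list term) : term := lams n (apps h args).

Lemma apps_snoc l h a : apps h (l ++ [a]) = App (apps h l) a.
Proof. unfold apps. rewrite fold_left_app. reflexivity. Qed.

Fixpoint unapps (t : term) : term * list term :=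
  match t with
  | App a b => let (h, l) := unapps a in (h, l ++ [b])
  | _ => (t, [])
  end.

Lemma unapps_apps args h : unapps (apps h args) = (fst (unapps h), snd (unapps h) ++ args).
Proof.
  induction args using rev_ind; simpl.
  - rewrite app_nil_r. destruct (unapps h); auto.
  - rewrite apps_snoc. simpl. rewrite IHargs, app_assoc. auto.
Qed.

Fixpoint unlams (t : term) : nat * term :=
  match t with
  | Lam a => let (n, b) := unlams a in (S n, b)
  | _ => (0, t)
  end.

Definition is_lam (t : term) : Prop := match t with Lam _ => True | _ => False end.

Lemma unlams_lams n T : ~ is_lam T -> unlams (lams n T) = (n, T).
Proof.
  induction n; intros HT; simpl.
  - destruct T; simpl in *; tauto.
  - rewrite IHn; auto.
Qed.

Lemma apps_not_lam args h : ~ is_lam h -> ~ is_lam (apps h args).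
Proof. induction args using rev_ind; auto. rewrite apps_snoc. simpl. auto. Qed.

Lemma hnf_inj n y args n' y' args' :
  hnf n y args = hnf n' y' args' -> n = n' /\ y = y' /\ args = args'.
Proof.
  unfold hnf; intros E. apply (f_equal unlams) in E.
  rewrite !unlams_lams in E by (apply apps_not_lam; simpl; auto). injection E as -> E.
  apply (f_equal unapps) in E. rewrite !unapps_apps in E. simpl in E. injection E; auto.
Qed.

Lemma head_red_spine (R : term -> term -> Prop) n P Q args : R P Q ->
  head_red R (spine n (App (Lam P) Q) args) (spine n (subst 0 Q P) args).
Proof.
  intros HR. unfold spine. induction n; simpl; [|apply hr_lam; auto].
  induction args using rev_ind; simpl.
  - apply hr_redex; auto.
  - rewrite !apps_snoc. destruct args using rev_ind; [apply hr_app; auto|].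
    rewrite apps_snoc in *. apply hr_app; auto.
Qed.

Lemma head_red_inv R M M' : head_red R M M' -> exists n P Q args, R P Q /\
  M = spine n (App (Lam P) Q) args /\ M' = spine n (subst 0 Q P) args.
Proof.
  unfold spine. induction 1 as [P Q HR | a b a' c _ [n [P [Q [args [HR [E1 E2]]]]]]
                                | a a' _ [n [P [Q [args [HR [E1 E2]]]]]]].
  - exists 0, P, Q, []. auto.
  - destruct n; simpl in E1; [|discriminate].
    exists 0, P, Q, (args ++ [c]). simpl in *. rewrite !apps_snoc, <- E1, <- E2. auto.
  - exists (S n), P, Q, args. simpl. subst. auto.
Qed.

Lemma head_red_incl R M M' : head_red R M M' -> head_step M M'.
Proof. induction 1; constructor; auto. exact I. Qed.

Lemma hnf_head_irreducible R n y args X : ~ head_red R (hnf n y args) X.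
Proof.
  unfold hnf; intros H. apply head_red_inv in H as [n' [P [Q [args' [_ [E _]]]]]].
  unfold spine in E. apply (f_equal unlams) in E.
  rewrite !unlams_lams in E by (apply apps_not_lam; simpl; auto).
  injection E as _ E. apply (f_equal unapps) in E. rewrite !unapps_apps in E. discriminate.
Qed.

Lemma head_step_deterministic M M1 M2 : head_step M M1 -> head_step M M2 -> M1 = M2.
Proof.
  intros H; revert M2; induction H; intros M2 H2; inversion H2; subst; auto; f_equal; auto.
Qed.

Lemma head_steps_normal_unique k M H1 k' H2 :
  steps head_step k M H1 -> (forall X, ~ head_step H1 X) ->
  steps head_step k' M H2 -> (forall X, ~ head_step H2 X) -> k = k' /\ H1 = H2.
Proof.
  intros H; revert k'; induction H as [t | k t u v Htu _ IH]; intros k' Hirr1 Hs2 Hirr2.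
  - inversion Hs2 as [| ? ? u ? Hu]; subst; auto. exfalso; eapply Hirr1; eauto.
  - inversion Hs2 as [| k0 ? u0 ? Hu0 Hs0]; subst.
    + exfalso; eapply Hirr2; eauto.
    + rewrite <- (head_step_deterministic _ _ _ Htu Hu0) in Hs0.
      destruct (IH _ Hirr1 Hs0 Hirr2) as [-> ->]. auto.
Qed.

Lemma head_to_hnf_unique M k n y args k' n' y' args' :
  head_to_hnf M k n y args -> head_to_hnf M k' n' y' args' ->
  k = k' /\ n = n' /\ y = y' /\ args = args'.
Proof.
  intros H H'.
  destruct (head_steps_normal_unique _ _ _ _ _ H (hnf_head_irreducible _ _ _ _)
              H' (hnf_head_irreducible _ _ _ _)) as [-> E].
  apply hnf_inj in E. tauto.
Qed.

Lemma hnf_data_some M k n y args : head_to_hnf M k n y args ->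
  hnf_data M = Some (k, n, y, args).
Proof.
  intros H. unfold hnf_data. destruct (excluded_middle_informative _) as [H1|H1].
  - destruct (constructive_indefinite_description _ H1) as [k' H2].
    destruct (constructive_indefinite_description _ H2) as [n' H3].
    destruct (constructive_indefinite_description _ H3) as [y' H4].
    destruct (constructive_indefinite_description _ H4) as [args' H5].
    destruct (head_to_hnf_unique _ _ _ _ _ _ _ _ _ H H5) as [-> [-> [-> ->]]]. auto.
  - exfalso. apply H1. exists k, n, y, args. auto.
Qed.

Lemma hnf_data_none M : ~ has_hnf M -> hnf_data M = None.
Proof. intros. unfold hnf_data. destruct (excluded_middle_informative _); tauto. Qed.

Lemma hnf_data_cases M : (hnf_data M = None /\ ~ has_hnf M) \/
  exists k n y args, hnf_data M = Some (k, n, y, args) /\ head_to_hnf M k n y args.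
Proof.
  destruct (classic (has_hnf M)) as [[k [n [y [args H]]]] | H].
  - right. exists k, n, y, args. auto using hnf_data_some.
  - left. auto using hnf_data_none.
Qed.

(** * A term with a reduct in head normal form has a head normal form *)

Inductive wh : term -> term -> Prop :=
| wh_beta P Q : wh (App (Lam P) Q) (subst 0 Q P)
| wh_app a a' b : wh a a' -> wh (App a b) (App a' b).

Lemma wh_lift M N d c : wh M N -> wh (lift d c M) (lift d c N).
Proof. induction 1; simpl; [rewrite lift_subst0|]; constructor; auto. Qed.

Lemma wh_subst M N k s : wh M N -> wh (subst k s M) (subst k s N).
Proof. induction 1; simpl; [rewrite subst_subst0|]; constructor; auto. Qed.

Lemma wh_head_step M N : wh M N -> head_step M N.
Proof.
  induction 1; [apply hr_redex; exact I|].
  destruct H; apply hr_app; auto.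
Qed.

(* Standard reductions, as far as weak head reduction is concerned: first weak
   head reduce, then reduce the immediate subterms in a standard way. *)
Inductive std : term -> term -> Prop :=
| std_var M x : reachable wh M (Var x) -> std M (Var x)
| std_lam M P P' : reachable wh M (Lam P) -> std P P' -> std M (Lam P')
| std_app M P Q P' Q' :
    reachable wh M (App P Q) -> std P P' -> std Q Q' -> std M (App P' Q').

Lemma std_refl M : std M M.
Proof. induction M; econstructor; eauto using reachable_refl. Qed.

Lemma std_wh M M' N : reachable wh M M' -> std M' N -> std M N.
Proof. intros H1 H2. inversion H2; subst; econstructor; eauto; eapply reachable_trans; eauto. Qed.

Lemma std_lift M N d c : std M N -> std (lift d c M) (lift d c N).
Proof.
  intros H; revert c.
  induction H as [M x Hx | M P P' HP _ IH | M P Q P' Q' HPQ _ IH1 _ IH2]; intros c;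
    [apply (reachable_map wh wh (lift d c)) in Hx | apply (reachable_map wh wh (lift d c)) in HP
    | apply (reachable_map wh wh (lift d c)) in HPQ]; auto using wh_lift; simpl in *.
  - destruct (Nat.ltb x c); constructor; auto.
  - econstructor; eauto.
  - econstructor; eauto.
Qed.

Lemma std_subst M M' N N' k : std M M' -> std N N' -> std (subst k N M) (subst k N' M').
Proof.
  intros H; revert k.
  induction H as [M x Hx | M P P' HP _ IH | M P Q P' Q' HPQ _ IH1 _ IH2]; intros k HN;
    [apply (reachable_map wh wh (subst k N)) in Hx | apply (reachable_map wh wh (subst k N)) in HP
    | apply (reachable_map wh wh (subst k N)) in HPQ]; auto using wh_subst; simpl in *.
  - destruct_nat_tests; try (constructor; auto; fail).
    eapply std_wh; eauto. apply std_lift; auto.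
  - econstructor; eauto.
  - econstructor; eauto.
Qed.

Lemma std_beta M N N' : std M N -> beta N N' -> std M N'.
Proof.
  intros H; revert N'; induction H; intros N0 HB; inversion HB; subst.
  - econstructor; eauto.
  - unfold beta_contract. inversion H0; subst.
    eapply std_wh; [|apply std_subst; eauto].
    eapply reachable_trans; [exact H|]. eapply reachable_trans.
    + apply (reachable_map wh wh (fun x => App x Q)); [intros; constructor; auto | exact H3].
    + apply reachable_step. constructor.
  - econstructor; eauto.
  - econstructor; eauto.
Qed.

Lemma red_std M N : red M N -> std M N.
Proof.
  intros [c H]. cut (forall X, std X M -> std X N); [intro C; apply C, std_refl|].
  induction H; auto. intros X HX. apply IHsteps. eapply std_beta; eauto.
Qed.

Lemma std_apps_var args y M : std M (apps (Var y) args) ->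
  exists args', reachable wh M (apps (Var y) args').
Proof.
  revert M; induction args using rev_ind; intros M H.
  - inversion H; subst. exists []. auto.
  - rewrite apps_snoc in H. inversion H as [| | ? P Q ? ? HPQ HP]; subst.
    destruct (IHargs _ HP) as [args' Ha]. exists (args' ++ [Q]). rewrite apps_snoc.
    eapply reachable_trans; eauto.
    apply (reachable_map wh wh (fun t => App t Q)); auto. intros; constructor; auto.
Qed.

Lemma std_hnf n y args M : std M (hnf n y args) -> has_hnf M.
Proof.
  assert (Hhead : forall X Y, reachable wh X Y -> exists k, steps head_step k X Y)
    by (intros X Y [k Hk]; exists k; exact (steps_incl _ _ wh_head_step _ _ _ Hk)).
  unfold hnf. revert M; induction n; intros M H; simpl in *.
  - destruct (std_apps_var _ _ _ H) as [args' Ha].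
    destruct (Hhead _ _ Ha) as [k Hk]. exists k, 0, y, args'. exact Hk.
  - inversion H as [| M0 P P' Hw Hs | ]; subst.
    destruct (IHn _ Hs) as [k [n' [y' [args' Hh]]]].
    destruct (Hhead _ _ Hw) as [k0 Hk0].
    exists (k0 + k), (S n'), y', args'. unfold head_to_hnf, hnf in *.
    eapply steps_trans; [exact Hk0|].
    apply (steps_map head_step head_step Lam); auto. intros; apply hr_lam; auto.
Qed.

Lemma head_red_beta R M N : head_red R M N -> beta M N.
Proof. induction 1; constructor; auto. Qed.

Lemma red_has_hnf M N : red M N -> has_hnf N -> has_hnf M.
Proof.
  intros HR [k [n [y [args H]]]]. apply (std_hnf n y args), red_std.
  eapply reachable_trans; [exact HR|].
  exists k. eapply steps_incl; [apply head_red_beta | exact H].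
Qed.

Inductive Forall2_sum {A B : Type} (R : A -> B -> nat -> Prop) :
  list A -> list B -> nat -> Prop :=
| Forall2_sum_nil : Forall2_sum R [] [] 0
| Forall2_sum_cons a b c l1 l2 s :
    R a b c -> Forall2_sum R l1 l2 s -> Forall2_sum R (a :: l1) (b :: l2) (c + s).

Lemma Forall2_sum_impl {A B} (R R' : A -> B -> nat -> Prop) l1 l2 s :
  (forall a b c, R a b c -> R' a b c) -> Forall2_sum R l1 l2 s -> Forall2_sum R' l1 l2 s.
Proof. induction 2; constructor; auto. Qed.

Lemma Forall2_sum_app {A B} (R : A -> B -> nat -> Prop) l1 l2 s l1' l2' s' :
  Forall2_sum R l1 l2 s -> Forall2_sum R l1' l2' s' ->
  Forall2_sum R (l1 ++ l1') (l2 ++ l2') (s + s').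
Proof. induction 1; intros; simpl; auto. rewrite <- Nat.add_assoc. constructor; auto. Qed.

Lemma Forall2_sum_rev {A B} (R : A -> B -> nat -> Prop) l1 l2 s :
  Forall2_sum R l1 l2 s -> Forall2_sum R (rev l1) (rev l2) s.
Proof.
  induction 1; simpl; [constructor|]. rewrite Nat.add_comm. apply Forall2_sum_app; auto.
  rewrite <- (Nat.add_0_r c). repeat constructor; auto.
Qed.

Lemma Forall2_sum_Forall {A B} (P : A -> Prop) (R : A -> B -> nat -> Prop) l1 l2 s :
  Forall P l1 -> Forall2_sum R l1 l2 s -> Forall2_sum (fun a b c => P a /\ R a b c) l1 l2 s.
Proof. intros HP H; induction H; inversion HP; constructor; auto. Qed.

Definition steps_list (c : nat) (l1 l2 : list term) : Prop :=
  Forall2_sum (fun a b c => steps beta c a b) l1 l2 c.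

Lemma steps_list_refl l : steps_list 0 l l.
Proof. induction l; [constructor|]. apply (Forall2_sum_cons _ _ _ 0); auto. constructor. Qed.

Lemma steps_list_trans a l1 l2 b l3 :
  steps_list a l1 l2 -> steps_list b l2 l3 -> steps_list (a + b) l1 l3.
Proof.
  unfold steps_list. intros H; revert b l3.
  induction H as [|x y c l1 l2 s Hxy _ IH]; intros b l3 H';
    inversion H' as [|y' z c' l2' l3' s' Hyz H'']; subst; simpl; auto.
  replace (c + s + (c' + s')) with ((c + c') + (s + s')) by lia.
  constructor; [eapply steps_trans | apply IH]; eauto.
Qed.

Lemma steps_apps_head args c X X' :
  steps beta c X X' -> steps beta c (apps X args) (apps X' args).
Proof. revert X X'; induction args; simpl; intros; auto. apply IHargs, steps_appl; auto. Qed.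

Lemma steps_apps_args c args args' X :
  steps_list c args args' -> steps beta c (apps X args) (apps X args').
Proof.
  intros H; revert X; induction H; intros X; simpl; [constructor|].
  eapply steps_trans; [apply steps_apps_head, steps_appr; eauto | apply IHForall2_sum].
Qed.

Lemma beta_lams_inv n T Y : beta (lams n T) Y -> exists T', Y = lams n T' /\ beta T T'.
Proof.
  revert Y; induction n; simpl; intros Y H; eauto.
  inversion H; subst. destruct (IHn _ H1) as [T' [-> B]]. eauto.
Qed.

Lemma beta_apps_inv args X Y : ~ is_lam X -> beta (apps X args) Y ->
  (exists X', beta X X' /\ Y = apps X' args) \/
  (exists args', steps_list 1 args args' /\ Y = apps X args').
Proof.
  revert Y; induction args using rev_ind; intros Y HX H.
  - left. eauto.
  - rewrite apps_snoc in H. inversion H as [P Q E | a a' b Ha | a b b' Hb | ]; subst.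
    + exfalso. apply (apps_not_lam args X HX). rewrite <- E. simpl; auto.
    + destruct (IHargs _ HX Ha) as [[X' [B ->]] | [args' [L ->]]].
      * left. exists X'. rewrite apps_snoc. auto.
      * right. exists (args' ++ [x]). rewrite apps_snoc. split; auto.
        apply (Forall2_sum_app _ _ _ 1 _ _ 0); auto.
        apply (Forall2_sum_cons _ _ _ 0 _ _ 0); constructor.
    + right. exists (args ++ [b']). rewrite apps_snoc. split; auto.
      apply (Forall2_sum_app _ _ _ 0 _ _ 1); [apply steps_list_refl|].
      apply (Forall2_sum_cons _ _ _ 1 _ _ 0); [apply steps_one; auto | constructor].
Qed.

Lemma hnf_steps_inv c n y args Y : steps beta c (hnf n y args) Y ->
  exists args', Y = hnf n y args' /\ steps_list c args args'.
Proof.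
  intros H. remember (hnf n y args) as M eqn:EM. revert args EM.
  induction H as [t | k t u v Htu _ IH]; intros args ->.
  - exists args. auto using steps_list_refl.
  - unfold hnf in Htu. apply beta_lams_inv in Htu as [T' [-> B]].
    apply beta_apps_inv in B as [[X' [B _]] | [args' [L ->]]]; [inversion B | | simpl; auto].
    destruct (IH args' eq_refl) as [args2 [-> L2]]. exists args2. split; auto.
    apply (steps_list_trans 1 _ args' k); auto.
Qed.

Lemma beta_spine_redex_inv n P Q args Y : beta (spine n (App (Lam P) Q) args) Y ->
  Y = spine n (subst 0 Q P) args \/
  (exists P', beta P P' /\ Y = spine n (App (Lam P') Q) args) \/
  (exists Q', beta Q Q' /\ Y = spine n (App (Lam P) Q') args) \/
  (exists args', steps_list 1 args args' /\ Y = spine n (App (Lam P) Q) args').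
Proof.
  unfold spine. intros H. apply beta_lams_inv in H as [T' [-> B]].
  apply beta_apps_inv in B as [[X' [B ->]] | [args' [L ->]]]; [| eauto 10 | simpl; auto].
  inversion B as [| a a' b Ha | a b b' Hb |]; subst.
  - left. reflexivity.
  - inversion Ha; subst. eauto 10.
  - eauto 10.
Qed.

Lemma spine_redex_steps_inv c n P Q args Y :
  steps beta c (spine n (App (Lam P) Q) args) Y ->
  exists a b e P1 Q1 args1,
    steps beta a P P1 /\ steps beta b Q Q1 /\ steps_list e args args1 /\
    ((Y = spine n (App (Lam P1) Q1) args1 /\ c = a + b + e) \/
     (exists c2, steps beta c2 (spine n (subst 0 Q1 P1) args1) Y /\ c = a + b + e + 1 + c2)).
Proof.
  intros H. remember (spine n (App (Lam P) Q) args) as M eqn:EM. revert P Q args EM.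
  induction H as [t | k t u v Htu Huv IH]; intros P Q args ->.
  - exists 0, 0, 0, P, Q, args.
    do 2 (split; [constructor|]). split; [apply steps_list_refl|]. left; auto.
  - apply beta_spine_redex_inv in Htu
      as [-> | [[P' [B ->]] | [[Q' [B ->]] | [args' [L ->]]]]].
    + exists 0, 0, 0, P, Q, args.
      do 2 (split; [constructor|]). split; [apply steps_list_refl|]. right. exists k. auto.
    + destruct (IH _ _ _ eq_refl) as [a [b [e [P1 [Q1 [args1 [H1 [H2 [H3 H4]]]]]]]]].
      exists (S a), b, e, P1, Q1, args1. repeat split; auto; [econstructor; eauto|].
      destruct H4 as [[? ?] | [c2 [? ?]]]; [left | right; exists c2]; split; auto; lia.
    + destruct (IH _ _ _ eq_refl) as [a [b [e [P1 [Q1 [args1 [H1 [H2 [H3 H4]]]]]]]]].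
      exists a, (S b), e, P1, Q1, args1. repeat split; auto; [econstructor; eauto|].
      destruct H4 as [[? ?] | [c2 [? ?]]]; [left | right; exists c2]; split; auto; lia.
    + destruct (IH _ _ _ eq_refl) as [a [b [e [P1 [Q1 [args1 [H1 [H2 [H3 H4]]]]]]]]].
      exists a, b, (1 + e), P1, Q1, args1. repeat split; auto; [eapply steps_list_trans; eauto|].
      destruct H4 as [[? ?] | [c2 [? ?]]]; [left | right; exists c2]; split; auto; lia.
Qed.

Lemma spine_contractum_steps n P Q args a b e P1 Q1 args1 :
  steps beta a P P1 -> steps beta b Q Q1 -> steps_list e args args1 ->
  steps beta (e + occ 0 P * b + a) (spine n (subst 0 Q P) args) (spine n (subst 0 Q1 P1) args1).
Proof.
  intros HP HQ Hargs. unfold spine. apply steps_lams. rewrite <- Nat.add_assoc.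
  eapply steps_trans; [apply steps_apps_args; eauto|]. apply steps_apps_head.
  eapply steps_trans; [apply steps_subst_arg; eauto | apply steps_subst; auto].
Qed.

(** * Head reduction is preserved by reduction *)

Lemma head_red_simulation R M M' c N : head_red R M M' -> steps beta c M N ->
  exists P Q Q1 b, R P Q /\ steps beta b Q Q1 /\
   ((exists N' a e, head_step N N' /\ steps beta (e + occ 0 P * b + a) M' N' /\ c = a + b + e)
    \/ (exists a e c2, steps beta (e + occ 0 P * b + a + c2) M' N /\ c = a + b + e + 1 + c2)).
Proof.
  intros H HN. apply head_red_inv in H as [n [P [Q [args [HR [-> ->]]]]]].
  destruct (spine_redex_steps_inv _ _ _ _ _ _ HN)
    as [a [b [e [P1 [Q1 [args1 [H1 [H2 [H3 H4]]]]]]]]].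
  exists P, Q, Q1, b. split; auto. split; auto.
  assert (HC := spine_contractum_steps n P Q args a b e P1 Q1 args1 H1 H2 H3).
  destruct H4 as [[-> ->] | [c2 [Hc2 ->]]].
  - left. exists (spine n (subst 0 Q1 P1) args1), a, e. split; auto.
    apply head_red_spine. exact I.
  - right. exists a, e, c2. split; auto. eapply steps_trans; eauto.
Qed.

Lemma head_step_simulation M M' c N : head_step M M' -> steps beta c M N ->
  (exists N' c', head_step N N' /\ steps beta c' M' N') \/ (exists c', steps beta c' M' N).
Proof.
  intros H HN.
  destruct (head_red_simulation _ _ _ _ _ H HN)
    as [P [Q [Q1 [b [_ [_ [[N' [a [e [? [? ?]]]]] | [a [e [c2 [? ?]]]]]]]]]]]; eauto.
Qed.

Lemma simple_redex_cost P Q Q1 b : simple_redex P Q -> steps beta b Q Q1 -> occ 0 P * b <= b.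
Proof.
  intros [HP | HQ] Hb.
  - destruct (occ 0 P) as [|[|]]; lia.
  - rewrite (steps_from_beta_nf _ _ _ Hb HQ). lia.
Qed.

Lemma simple_head_step_simulation M M' c N :
  head_red simple_redex M M' -> steps beta c M N ->
  (exists N' c', head_step N N' /\ steps beta c' M' N' /\ c' <= c) \/
  (exists c', steps beta c' M' N /\ c' < c).
Proof.
  intros H HN. destruct (head_red_simulation _ _ _ _ _ H HN) as [P [Q [Q1 [b [HS [Hb X]]]]]].
  assert (Hcost := simple_redex_cost _ _ _ _ HS Hb).
  destruct X as [[N' [a [e [? [? ?]]]]] | [a [e [c2 [? ?]]]]].
  - left. exists N', (e + occ 0 P * b + a). repeat split; auto. lia.
  - right. eexists. split; eauto. lia.
Qed.

Lemma head_to_hnf_steps k M n y args c N :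
  steps head_step k M (hnf n y args) -> steps beta c M N ->
  exists j args' cf, steps head_step j N (hnf n y args') /\ steps_list cf args args' /\ j <= k.
Proof.
  revert M c N; induction k; intros M c N H HN; inversion H as [|? ? M' ? HM HM']; subst.
  - destruct (hnf_steps_inv _ _ _ _ _ HN) as [args' [-> L]].
    exists 0, args', c. repeat split; auto. constructor.
  - destruct (head_step_simulation _ _ _ _ HM HN) as [[N' [c' [Hh Hs]]] | [c' Hs]].
    + destruct (IHk _ _ _ HM' Hs) as [j [args' [cf [? [? ?]]]]].
      exists (S j), args', cf. repeat split; auto. econstructor; eauto. lia.
    + destruct (IHk _ _ _ HM' Hs) as [j [args' [cf [? [? ?]]]]].
      exists j, args', cf. repeat split; auto.
Qed.

Lemma simple_head_to_hnf_steps k M n y args c N :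
  steps (head_red simple_redex) k M (hnf n y args) -> steps beta c M N ->
  exists j args' cf, steps head_step j N (hnf n y args') /\ steps_list cf args args' /\
    j <= k /\ k <= j + (c - cf) /\ cf <= c.
Proof.
  revert M c N; induction k; intros M c N H HN; inversion H as [|? ? M' ? HM HM']; subst.
  - destruct (hnf_steps_inv _ _ _ _ _ HN) as [args' [-> L]].
    exists 0, args', c. repeat split; auto; [constructor | lia].
  - destruct (simple_head_step_simulation _ _ _ _ HM HN)
      as [[N' [c' [Hh [Hs Hc]]]] | [c' [Hs Hc]]].
    + destruct (IHk _ _ _ HM' Hs) as [j [args' [cf [? [? [? [? ?]]]]]]].
      exists (S j), args', cf. repeat split; auto; [econstructor; eauto | lia | lia | lia].
    + destruct (IHk _ _ _ HM' Hs) as [j [args' [cf [? [? [? [? ?]]]]]]].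
      exists j, args', cf. repeat split; auto; lia.
Qed.

(** * Clocks of Böhm trees can only decrease along reduction *)

Section SpineTree.
Variable y : nat.

(* A copy of the local fixpoint of [BTc], with [y] a section variable so that
   [BTc_unfold] holds by conversion. *)
Fixpoint spine_tree (ann : option nat) (n : nat) (rargs : list term)
    (q : position) {struct q} : option node :=
  match n with
  | S n' => match q with
            | [] => Some (LLam, ann)
            | D0 :: q' => spine_tree None n' rargs q'
            | _ => None
            end
  | 0 => match rargs with
         | [] => match q with [] => Some (LVar y, ann) | _ => None end
         | A :: rargs' => match q with
                          | [] => Some (LApp, ann)
                          | D1 :: q' => spine_tree None 0 rargs' q'
                          | D2 :: q' => BTc A q'
                          | _ => None
                          end
         end
  end.

End SpineTree.

Lemma BTc_unfold M p : BTc M p =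
  match hnf_data M with
  | None => match p with [] => Some (LBot, None) | _ => None end
  | Some (k, n, y, args) => spine_tree y (Some k) n (rev args) p
  end.
Proof. destruct p; simpl; destruct (hnf_data M) as [[[[k n] y] args]|]; reflexivity. Qed.

Definition ann_le (a a' : option nat) : Prop :=
  match a, a' with
  | None, None => True
  | Some k, Some k' => k <= k'
  | _, _ => False
  end.

Definition node_le (o o' : option node) : Prop :=
  match o, o' with
  | None, None => True
  | Some (l, a), Some (l', a') => l = l' /\ ann_le a a'
  | _, _ => False
  end.

Lemma spine_tree_le N q y ann1 ann2 n r1 r2 s : length q <= N -> ann_le ann2 ann1 ->
  Forall2_sum (fun A B _ => forall q', length q' < N -> node_le (BTc B q') (BTc A q')) r1 r2 s ->
  node_le (spine_tree y ann2 n r2 q) (spine_tree y ann1 n r1 q).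
Proof.
  revert ann1 ann2 n r1 r2 s.
  induction q as [|d q IH]; intros ann1 ann2 n r1 r2 s Hl Ha HF; simpl in Hl.
  - destruct n; simpl; [destruct HF|]; simpl; auto.
  - destruct n; simpl.
    + destruct HF as [|A B c r1 r2 s HAB HF]; simpl; auto.
      destruct d; simpl; auto. eapply IH; eauto; simpl; auto; lia.
    + destruct d; simpl; auto. eapply IH; eauto; simpl; auto; lia.
Qed.

Lemma BTc_red_le M L p : red M L -> node_le (BTc L p) (BTc M p).
Proof.
  enough (H : forall N M L p, red M L -> length p < N -> node_le (BTc L p) (BTc M p))
    by (intros; eapply H; eauto).
  clear. induction N; intros M L p HR Hp; [lia|].
  rewrite !BTc_unfold. destruct (hnf_data_cases M) as [[E1 H1] | [k [n [y [args [E1 H1]]]]]].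
  - assert (HL : ~ has_hnf L) by (intro; apply H1; eapply red_has_hnf; eauto).
    rewrite E1, (hnf_data_none _ HL). destruct p; simpl; auto.
  - destruct HR as [c HR].
    destruct (head_to_hnf_steps _ _ _ _ _ _ _ H1 HR) as [j [args' [cf [Hj [Hl Hjk]]]]].
    rewrite E1, (hnf_data_some L j n y args' Hj).
    apply (spine_tree_le N _ _ _ _ _ _ _ cf); [lia | simpl; auto|].
    apply Forall2_sum_rev. eapply Forall2_sum_impl; [|exact Hl].
    intros A B c0 HAB q' Hq'. apply IHN; auto. exists c0; auto.
Qed.

(** * Simple terms: clocks drop at only finitely many positions *)

Definition ann_lt (a a' : option nat) : Prop :=
  match a, a' with Some k, Some k' => k < k' | _, _ => False end.

Definition clock_drop (o o' : option node) : Prop :=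
  match o, o' with Some (_, a), Some (_, a') => ann_lt a' a | _, _ => False end.

(* Finite sets of positions are represented by duplicate-free lists. *)
Definition drops_le (N : nat) (T T' : ctree) (c : nat) : Prop :=
  forall ps : list position, NoDup ps ->
    (forall p, In p ps -> length p < N /\ clock_drop (T p) (T' p)) -> length ps <= c.

Lemma drops_le_mono N N' T T' c : N <= N' -> drops_le N' T T' c -> drops_le N T T' c.
Proof. intros HN H ps HS HD. apply H; auto. intros p Hp. destruct (HD p Hp); split; auto; lia. Qed.

Definition dir_eqb (d e : dir) : bool :=
  match d, e with D0, D0 | D1, D1 | D2, D2 => true | _, _ => false end.

Lemma dir_eqb_spec d e : dir_eqb d e = true <-> d = e.
Proof. destruct d, e; simpl; split; congruence. Qed.

Definition subpositions (d : dir) (ps : list position) : list position :=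
  flat_map (fun p => match p with e :: q => if dir_eqb d e then [q] else [] | [] => [] end) ps.

Lemma In_subpositions d ps q : In q (subpositions d ps) <-> In (d :: q) ps.
Proof.
  unfold subpositions. rewrite in_flat_map. split.
  - intros [[|e p] [Hp Hq]]; simpl in Hq; [tauto|].
    destruct (dir_eqb d e) eqn:E; simpl in Hq; [|tauto].
    apply dir_eqb_spec in E as ->. destruct Hq as [-> | []]; auto.
  - intros H. exists (d :: q). split; auto. destruct d; simpl; auto.
Qed.

Lemma NoDup_subpositions d ps : NoDup ps -> NoDup (subpositions d ps).
Proof.
  induction 1 as [|[|e q] ps Hq HS IH]; simpl; [constructor | auto|].
  destruct (dir_eqb d e) eqn:E; simpl; auto.
  apply dir_eqb_spec in E as ->. constructor; auto. rewrite In_subpositions. auto.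
Qed.

Definition is_nilb (p : position) : bool := match p with [] => true | _ => false end.

Lemma length_split_by_direction ps : length ps =
  length (filter is_nilb ps) + length (subpositions D0 ps) + length (subpositions D1 ps)
  + length (subpositions D2 ps).
Proof.
  induction ps as [|[|[] q] ps IH]; [reflexivity | | | |];
    unfold subpositions in *; cbn [length filter is_nilb flat_map dir_eqb app] in *; lia.
Qed.

Lemma NoDup_filter_nil_length ps r : NoDup ps -> (In [] ps -> 1 <= r) ->
  length (filter is_nilb ps) <= r.
Proof.
  intros HS Hr. assert (Hnil : forall p, In p (filter is_nilb ps) -> p = [] /\ In [] ps).
  { intros p Hp. apply filter_In in Hp as [Hp Hnil]. destruct p; [auto | discriminate]. }
  assert (ND := NoDup_filter is_nilb HS).
  destruct (filter is_nilb ps) as [|p [|p' l]]; simpl; [lia | apply Hr, (Hnil p); simpl; auto|].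
  exfalso. inversion ND as [|? ? Hp _]; subst. apply Hp.
  destruct (Hnil p) as [-> _], (Hnil p') as [-> _]; simpl; auto.
Qed.

Lemma drops_le_split N T T' r b0 b1 b2 : (clock_drop (T []) (T' []) -> 1 <= r) ->
  drops_le N (fun q => T (D0 :: q)) (fun q => T' (D0 :: q)) b0 ->
  drops_le N (fun q => T (D1 :: q)) (fun q => T' (D1 :: q)) b1 ->
  drops_le N (fun q => T (D2 :: q)) (fun q => T' (D2 :: q)) b2 ->
  drops_le (S N) T T' (r + b0 + b1 + b2).
Proof.
  intros Hr H0 H1 H2 ps HS HD.
  assert (Hsub : forall d, NoDup (subpositions d ps) /\ forall q, In q (subpositions d ps) ->
            length q < N /\ clock_drop (T (d :: q)) (T' (d :: q))).
  { intros d. split; [apply NoDup_subpositions; auto|].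
    intros q Hq. apply In_subpositions, HD in Hq as [Hl Hq]. simpl in Hl. split; auto; lia. }
  rewrite length_split_by_direction.
  assert (length (filter is_nilb ps) <= r).
  { apply NoDup_filter_nil_length; auto. intros Hin. apply Hr, HD; auto. }
  assert (length (subpositions D0 ps) <= b0) by (apply H0; apply Hsub).
  assert (length (subpositions D1 ps) <= b1) by (apply H1; apply Hsub).
  assert (length (subpositions D2 ps) <= b2) by (apply H2; apply Hsub).
  lia.
Qed.

Lemma drops_le_none N T T' : (forall q, T q = None) -> drops_le N T T' 0.
Proof.
  intros HT [|p ps] _ HS; simpl; auto.
  destruct (HS p) as [_ Hp]; simpl; auto. rewrite HT in Hp. destruct Hp.
Qed.

Lemma spine_tree_drops_le N y n ann1 ann2 r1 r2 s d :
  (ann_lt ann2 ann1 -> 1 <= d) ->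
  Forall2_sum (fun A B c => drops_le N (BTc A) (BTc B) c) r1 r2 s ->
  drops_le (S N) (spine_tree y ann1 n r1) (spine_tree y ann2 n r2) (d + s).
Proof.
  assert (Hnone : forall q, (fun _ : position => @None node) q = None) by reflexivity.
  revert ann1 ann2 d. induction n as [|n IHn]; intros ann1 ann2 d Hd HF.
  - revert ann1 ann2 r2 s d Hd HF. induction r1 as [|A r1 IHr]; intros ann1 ann2 r2 s d Hd HF;
      inversion HF as [|? B c ? l2 s' HAB HF']; subst.
    + replace (d + 0) with (d + 0 + 0 + 0) by lia.
      apply drops_le_split; auto; apply drops_le_none; auto.
    + replace (d + (c + s')) with (d + 0 + s' + c) by lia.
      apply drops_le_split; auto; [apply drops_le_none; auto|].
      replace s' with (0 + s') by lia. apply (drops_le_mono _ (S N)); auto.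
      apply IHr; simpl; auto. tauto.
  - replace (d + s) with (d + (0 + s) + 0 + 0) by lia.
    apply drops_le_split; auto; try (apply drops_le_none; auto).
    apply (drops_le_mono _ (S N)); auto. apply IHn; simpl; auto. tauto.
Qed.

Lemma simple_term_head_to_hnf M k n y args : simple_term M -> head_to_hnf M k n y args ->
  steps (head_red simple_redex) k M (hnf n y args) /\ Forall simple_term args.
Proof.
  intros HM H. destruct HM as [M Hno | M k' n' y' args' Hs Hargs].
  - exfalso. apply Hno. exists k, n, y, args; auto.
  - assert (H' : head_to_hnf M k' n' y' args')
      by (eapply steps_incl; [apply head_red_incl | exact Hs]).
    destruct (head_to_hnf_unique _ _ _ _ _ _ _ _ _ H' H) as [-> [-> [-> ->]]].
    split; auto. apply Forall_forall; auto.
Qed.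

Lemma simple_drops_le N M L c : simple_term M -> steps beta c M L ->
  drops_le N (BTc M) (BTc L) c.
Proof.
  revert M L c; induction N; intros M L c HM HL.
  { intros [|p ps] _ HS; simpl; [lia|]. destruct (HS p); simpl; auto; lia. }
  destruct (hnf_data_cases M) as [[E1 _] | [k [n [y [args [E1 H1]]]]]].
  - intros [|p ps] _ HS; simpl; [lia|]. destruct (HS p) as [_ D]; simpl; auto.
    rewrite BTc_unfold, E1 in D.
    destruct p; [destruct (BTc L []) as [[? [?|]]|]|]; simpl in D; tauto.
  - destruct (simple_term_head_to_hnf _ _ _ _ _ HM H1) as [Hsimp Hargs].
    destruct (simple_head_to_hnf_steps _ _ _ _ _ _ _ Hsimp HL)
      as [j [args' [cf [Hj [Hl [Hjk [Hkj Hcf]]]]]]].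
    assert (E2 := hnf_data_some L j n y args' Hj).
    intros ps HS HD. replace c with ((c - cf) + cf) by lia.
    apply (spine_tree_drops_le N y n (Some k) (Some j) (rev args) (rev args')); auto.
    + simpl. lia.
    + apply Forall2_sum_rev. eapply Forall2_sum_impl; [|apply Forall2_sum_Forall; eauto].
      intros A B c0 [HA HB]. apply IHN; auto.
    + intros p Hp. specialize (HD p Hp). rewrite !BTc_unfold, E1, E2 in HD. auto.
Qed.

Lemma length_le_list_max (ps : list position) p : In p ps -> length p <= list_max (map (@length dir) ps).
Proof.
  intros Hp. assert (H := proj1 (list_max_le (map (@length dir) ps) _) (le_n _)).
  rewrite Forall_forall in H. apply H, in_map, Hp.
Qed.

Lemma NoDup_of_unbounded_depth (D : position -> Prop) :
  (forall l, exists p, l <= length p /\ D p) ->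
  forall m, exists ps, NoDup ps /\ length ps = m /\ forall p, In p ps -> D p.
Proof.
  intros H. induction m as [|m [ps [HN [HL HD]]]].
  - exists []. repeat split; simpl; auto using NoDup_nil. tauto.
  - destruct (H (S (list_max (map (@length dir) ps)))) as [p [Hp Dp]].
    exists (p :: ps). repeat split; simpl; auto.
    + constructor; auto. intros Hin. apply length_le_list_max in Hin. lia.
    + intros q [<- | Hq]; auto.
Qed.

Lemma simple_drops_eventually_vanish M L c : simple_term M -> steps beta c M L ->
  exists l, forall p, l <= length p -> ~ clock_drop (BTc M p) (BTc L p).
Proof.
  intros HM HL. apply NNPP. intros Hn.
  assert (Hdeep : forall l, exists p, l <= length p /\ clock_drop (BTc M p) (BTc L p)).
  { intros l. apply NNPP. intros Hl. apply Hn. exists l. intros p Hp Dp. apply Hl. eauto. }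
  destruct (NoDup_of_unbounded_depth _ Hdeep (S c)) as [ps [HS [HSl HD]]].
  enough (length ps <= c) by lia.
  apply (simple_drops_le (S (list_max (map (@length dir) ps))) M L c HM HL ps HS).
  intros p Hp. split; auto. apply length_le_list_max in Hp. lia.
Qed.

Lemma node_le_erase o o' : node_le o o' -> erase o = erase o'.
Proof. destruct o as [[l a]|], o' as [[l' a']|]; simpl; try tauto. intros [-> _]. auto. Qed.

Lemma clock_le_of_common_lower (nd : node) o o' :
  node_le o (Some nd) -> node_le o o' -> ~ clock_drop (Some nd) o ->
  match snd nd, option_map snd o' with
  | None, Some None => True
  | Some k1, Some (Some k2) => k1 <= k2
  | _, _ => False
  end.
Proof.
  destruct nd as [l1 [a1|]], o as [[l [a|]]|], o' as [[l' [a'|]]|];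
    simpl; intros; try tauto; lia.
Qed.

Theorem theorem4p11 (M N : term) :
  simple_term M -> ~ ev_le (BTc M) (BTc N) -> ~ beta_eq M N.
Proof.
  intros HM Hev Heq. apply Hev.
  destruct (beta_eq_common_reduct _ _ Heq) as [L [HML HNL]].
  assert (LM := fun p => BTc_red_le M L p HML).
  assert (LN := fun p => BTc_red_le N L p HNL).
  destruct HML as [c HML].
  destruct (simple_drops_eventually_vanish _ _ _ HM HML) as [l Hl].
  split.
  - intros p. rewrite <- (node_le_erase _ _ (LM p)). apply node_le_erase, LN.
  - exists l. intros p nd Hp E.
    apply (clock_le_of_common_lower nd (BTc L p)); [rewrite <- E | | rewrite <- E]; auto.
Qed.
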